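(* For every $n\geq 1$, the number of Grand-Dyck paths of semilength $n$ starting with an up step and avoiding the pattern $DUD$ equals the coefficient of $z^n$ in $\frac{1-3z-\sqrt{1-2z-3z^2}}{6z-2}$, i.e. the $n$-th term of OEIS sequence A005773 ($1,1,2,5,13,35,96,\dots$ indexed from $n=0$).
   Context: A Grand-Dyck path of semilength $n$ starting with an up step is a word with exactly $n$ letters $U$ and $n$ letters $D$ whose first letter is $U$. It avoids the pattern $DUD$ if it has no three consecutive letters equal to $D,U,D$. *)

From mathcomp Require Import all_boot all_algebra.
Set Implicit Arguments. Unset Strict Implicit. Unset Printing Implicit Defensive.
Import GRing.Theory Num.Theory.

Definition stepU : bool := true.
Definition stepD : bool := false.

Definition grand_dyck_startU (n : nat) (w : seq bool) : bool :=
  [&& size w == n.*2, count_mem stepU w == n, count_mem stepD w == n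
    & head stepD w == stepU].

Definition avoids_DUD (w : seq bool) : bool :=
  ~~ infix [:: stepD; stepU; stepD] w.

Definition num_paths (n : nat) : nat :=
  #|[set t : (n.*2).-tuple bool | grand_dyck_startU n t && avoids_DUD t]|.

Local Open Scope ring_scope.

Definition fps := nat -> rat.

Definition fps_mul (f g : fps) : fps :=
  fun k => \sum_(i < k.+1) f i * g (k - i)%N.

Definition fps_disc : fps :=
  fun k => if k == 0%N then 1 else if k == 1%N then -2 else if k == 2%N then -3 else 0.
Definition fps_num_poly : fps :=
  fun k => if k == 0%N then 1 else if k == 1%N then -3 else 0.
Definition fps_den : fps :=
  fun k => if k == 0%N then -2 else if k == 1%N then 6 else 0.

Definition is_sqrt_disc (s : fps) : Prop :=
  s 0%N = 1 /\ forall k, fps_mul s s k = fps_disc k.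

(* a is the series (1 - 3z - s)/(6z - 2), i.e. (6z - 2) * a = 1 - 3z - s
   (6z-2 is invertible in rat[[z]] since its constant term is -2). *)
Definition is_gf (s a : fps) : Prop :=
  forall k, fps_mul fps_den a k = fps_num_poly k - s k.

(* Prepending U to a word preserves DUD-avoidance, and prepending D preserves it unless the
   word starts with UD.  Hence the number T(u,d) of DUD-avoiding words with u letters U and d
   letters D, and the number F(u,d) of those starting with D, satisfy
   T(u+1,d) = T(u,d) + F(u+1,d) and F(u+1,d+1) + F(u,d) = T(u+1,d), which are solved by
   F(u,d+1) = sum_k C(d,k) C(u-k,k) and T(u,d+1) = sum_k C(d,k) C(u+1-k,k+1).  Deleting the
   initial U of a path of semilength n+1 leaves any DUD-avoiding word with n letters U and
   n+1 letters D, so there are q_n = sum_k C(n,k) C(n+1-k,k+1) paths.  By creative telescoping,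
   (n+3) q_(n+2) = 2(n+3) q_(n+1) + 3(n+1) q_n.  On the other side, C = 1 + 2a satisfies
   (1-3z) C^2 = 1 + z; differentiating gives (1-2z-3z^2) a' = 1 + 2a, i.e. the same recurrence
   for n |-> a_(n+1), and both sequences start with 1, 2. *)

From mathcomp Require Import all_boot all_algebra.
From mathcomp Require Import ring lra zify.
Set Implicit Arguments. Unset Strict Implicit. Unset Printing Implicit Defensive.
Import GRing.Theory Num.Theory.

(** * Counting words by their numbers of letters *)

Fixpoint words (L : nat) : seq (seq bool) :=
  if L is L'.+1 then [seq true :: w | w <- words L'] ++ [seq false :: w | w <- words L']
  else [:: [::]].

Lemma mem_words L w : (w \in words L) = (size w == L).
Proof.
elim: L w => [|L IH] [|b w] //=; rewrite mem_cat.
  by apply/orP => -[] /mapP [].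
apply/orP/idP => [|]; last by rewrite eqSS -IH; case: b => Hw; [left|right]; apply: map_f.
by case=> /mapP [v + [_ ->]]; rewrite IH.
Qed.

Lemma uniq_words L : uniq (words L).
Proof.
elim: L => //= L IH; rewrite cat_uniq !map_inj_uniq ?IH //=; try by move=> ? ? [].
by rewrite andbT; apply/hasPn => _ /mapP [w _ ->]; apply/mapP => -[].
Qed.

Lemma card_tuple_words L (Q : pred (seq bool)) :
  #|[set t : L.-tuple bool | Q t]| = count Q (words L).
Proof.
rewrite cardE /enum_mem size_filter -enumT.
under eq_count => t do rewrite /= inE.
rewrite -(count_map val Q); apply/permP/uniq_perm.
- by rewrite map_inj_uniq ?enum_uniq //; apply: val_inj.
- exact: uniq_words.
move=> w; rewrite mem_words; apply/mapP/idP => [[t _ ->]|Hw]; first by rewrite size_tuple.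
by exists (Tuple Hw); rewrite ?mem_enum.
Qed.

Definition nwords (P : pred (seq bool)) (u d : nat) : nat :=
  count (fun w => [&& P w, count_mem true w == u & count_mem false w == d]) (words (u + d)).

Lemma eq_nwords P Q u d : P =1 Q -> nwords P u d = nwords Q u d.
Proof. by move=> PQ; apply: eq_count => w; rewrite PQ. Qed.

Lemma nwordsID (Q P : pred (seq bool)) u d :
  nwords P u d = nwords (predI P Q) u d + nwords (predI P (predC Q)) u d.
Proof.
rewrite /nwords; elim: (words _) => //= w ws ->; rewrite addnACA; congr (_ + _).
by case: (P w) (Q w) (_ == u) (_ == d) => [] [] [] [].
Qed.

Lemma nwords_split P u d : 0 < u + d ->
  nwords P u d = nwords (fun w => P w && prefix [:: true] w) u d
               + nwords (fun w => P w && prefix [:: false] w) u d.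
Proof.
move=> ud_gt0; rewrite (nwordsID (prefix [:: true])); congr (_ + _).
apply: eq_in_count => w; rewrite mem_words => /eqP size_w /=.
case: w size_w => [ud0|[] w _]; rewrite /= ?prefix0s ?andbT ?andbF //.
by rewrite -ud0 in ud_gt0.
Qed.

Lemma nwords_startsU P u d :
  nwords (fun w => P w && prefix [:: true] w) u d =
  if u is u'.+1 then nwords (fun w => P (true :: w)) u' d else 0.
Proof.
rewrite /nwords; case: u => [|u].
  by rewrite (eq_count (a2 := pred0)) ?count_pred0 // => -[|[] w] //=; rewrite andbF.
rewrite addSn /= count_cat !count_map (eq_count (a1 := preim (cons false) _) (a2 := pred0)).
  by rewrite count_pred0 addn0; apply: eq_count => w /=; rewrite prefix0s andbT eqSS.
by move=> w /=; rewrite andbF.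
Qed.

Lemma nwords_startsD P u d :
  nwords (fun w => P w && prefix [:: false] w) u d =
  if d is d'.+1 then nwords (fun w => P (false :: w)) u d' else 0.
Proof.
rewrite /nwords; case: d => [|d].
  by rewrite (eq_count (a2 := pred0)) ?count_pred0 // => -[|[] w] //=; rewrite !andbF.
rewrite addnS /= count_cat !count_map (eq_count (a1 := preim (cons true) _) (a2 := pred0)).
  by rewrite count_pred0 add0n; apply: eq_count => w /=; rewrite prefix0s andbT eqSS.
by move=> w /=; rewrite andbF.
Qed.

Lemma nwords0U P d : nwords P 0 d = P (nseq d false).
Proof.
elim: d P => [|d IH] P; first by rewrite /nwords /= !andbT addn0.
by rewrite nwords_split // nwords_startsU nwords_startsD IH.
Qed.

Lemma nwordsU0 P u : nwords P u 0 = P (nseq u true).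
Proof.
elim: u P => [|u IH] P; first exact: nwords0U.
by rewrite nwords_split ?addn0 // nwords_startsU nwords_startsD IH addn0.
Qed.

(** * DUD-avoiding words *)

Lemma avoids_DUD_consU w : avoids_DUD (true :: w) = avoids_DUD w.
Proof. by []. Qed.

Lemma avoids_DUD_consD w :
  avoids_DUD (false :: w) = avoids_DUD w && ~~ prefix [:: true; false] w.
Proof. by rewrite /avoids_DUD infix_consl negb_or andbC. Qed.

Lemma avoids_DUD_nseq b n : avoids_DUD (nseq n b).
Proof.
elim: n => // n IH; case: b IH => IH /=; first by rewrite avoids_DUD_consU.
by rewrite avoids_DUD_consD IH; case: n {IH}.
Qed.

Definition num_avoiding (u d : nat) : nat := nwords avoids_DUD u d.

Definition num_avoiding_D (u d : nat) : nat :=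
  nwords (fun w => avoids_DUD w && prefix [:: false] w) u d.

Lemma num_avoiding0U d : num_avoiding 0 d = 1.
Proof. by rewrite /num_avoiding nwords0U avoids_DUD_nseq. Qed.

Lemma num_avoidingU0 u : num_avoiding u 0 = 1.
Proof. by rewrite /num_avoiding nwordsU0 avoids_DUD_nseq. Qed.

Lemma num_avoiding_DU0 u : num_avoiding_D u 0 = 0.
Proof. exact: nwords_startsD. Qed.

Lemma num_avoiding_D0U d : num_avoiding_D 0 d.+1 = 1.
Proof. by rewrite /num_avoiding_D nwords_startsD nwords0U (avoids_DUD_nseq _ d.+1). Qed.

Lemma num_avoidingSU u d : num_avoiding u.+1 d = num_avoiding u d + num_avoiding_D u.+1 d.
Proof. by rewrite /num_avoiding nwords_split // nwords_startsU. Qed.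

Lemma num_avoiding_DSS u d :
  num_avoiding_D u.+1 d.+1 + num_avoiding_D u d = num_avoiding u.+1 d.
Proof.
rewrite /num_avoiding (nwordsID (prefix [:: true; false])) addnC; congr (_ + _).
  pose P w := avoids_DUD w && prefix [:: false] (behead w).
  rewrite (@eq_nwords _ (fun w => P w && prefix [:: true] w)); first by rewrite nwords_startsU.
  by case=> [|[] w]; rewrite /= ?prefix0s ?andbT ?andbF.
by rewrite /num_avoiding_D nwords_startsD; apply/eq_nwords/avoids_DUD_consD.
Qed.

Lemma num_paths_avoiding n : num_paths n.+1 = num_avoiding n n.+1.
Proof.
rewrite /num_avoiding -[RHS](nwords_startsU avoids_DUD n.+1 n.+1).
rewrite /num_paths (card_tuple_words _ (fun w => grand_dyck_startU n.+1 w && avoids_DUD w)).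
rewrite /nwords addnn; apply: eq_in_count => w; rewrite mem_words => /eqP size_w.
rewrite /grand_dyck_startU size_w eqxx /=.
have -> : (head stepD w == stepU) = prefix [:: true] w.
  by case: w {size_w} => [|[] w] //=; rewrite prefix0s.
by case: (avoids_DUD w) (prefix _ _) => [] []; rewrite ?andbT ?andbF.
Qed.

Definition binom_sum (j u d : nat) : nat := \sum_(k < d.+1) 'C(d, k) * 'C(u - k, k + j).

Lemma bin_subS n k m : k <= m -> 'C(n.+1 - k, m.+1) = 'C(n - k, m.+1) + 'C(n - k, m).
Proof.
move=> k_le_m; have [k_le_n|n_lt_k] := leqP k n; first by rewrite subSn // binS.
by rewrite !(@bin_small (_ - _)) //; lia.
Qed.

Lemma binom_sum_d0 j u : binom_sum j u 0 = 'C(u, j).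
Proof. by rewrite /binom_sum big_ord1 bin0 subn0 mul1n. Qed.

Lemma binom_sum_u0 j d : binom_sum j 0 d = 'C(0, j).
Proof.
rewrite /binom_sum big_ord_recl bin0 mul1n big1 ?addn0 // => k _.
by rewrite sub0n bin0n muln0.
Qed.

Lemma binom_sumS j u d : binom_sum j.+1 u.+1 d = binom_sum j.+1 u d + binom_sum j u d.
Proof.
rewrite /binom_sum -big_split; apply: eq_bigr => k _ /=.
by rewrite addnS -mulnDr bin_subS ?leq_addr.
Qed.

Lemma binom_sum_dS j u d : binom_sum j u.+1 d.+1 = binom_sum j u.+1 d + binom_sum j.+1 u d.
Proof.
rewrite /binom_sum big_ord_recl [X in _ = X + _]big_ord_recl -addnA !bin0; congr (_ + _).
pose F (i : 'I_d.+1) := 'C(d, i.+1) * 'C(u - i, i.+1 + j) + 'C(d, i) * 'C(u - i, i.+1 + j).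
rewrite (eq_bigr F); last by move=> i _; rewrite lift0 binS subSS mulnDl.
rewrite big_split big_ord_recr /= bin_small // mul0n addn0; congr (_ + _).
by apply: eq_bigr => k _; rewrite addSnnS.
Qed.

Lemma num_avoiding_level d :
  (forall u, num_avoiding_D u d.+1 = binom_sum 0 u d) ->
  forall u, num_avoiding u d.+1 = binom_sum 1 u.+1 d.
Proof.
move=> closed_D; elim=> [|u IH]; first by rewrite num_avoiding0U binom_sumS !binom_sum_u0.
by rewrite num_avoidingSU IH closed_D (binom_sumS 0 u.+1).
Qed.

Lemma num_avoiding_D_closed d u : num_avoiding_D u d.+1 = binom_sum 0 u d.
Proof.
elim: d u => [|d IH] [|u]; rewrite ?num_avoiding_D0U ?binom_sum_u0 //.
  apply: (@addIn (num_avoiding_D u 0)).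
  by rewrite num_avoiding_DSS num_avoidingU0 num_avoiding_DU0 binom_sum_d0.
apply: (@addIn (num_avoiding_D u d.+1)).
rewrite num_avoiding_DSS (num_avoiding_level IH) IH binom_sum_dS !binom_sumS.
by rewrite addnC addnA.
Qed.

Lemma num_paths_binom_sum n : num_paths n.+1 = binom_sum 1 n.+1 n.
Proof. by rewrite num_paths_avoiding (num_avoiding_level (num_avoiding_D_closed n)). Qed.

(** * A recurrence for the diagonal binomial sum *)

Local Open Scope ring_scope.

(* [ifact z] is 1/z! extended by 0 to negative integers (that is, 1/Gamma(z+1)), so that
   [ifact_pred] holds for every integer [z]: this removes all boundary cases from the
   verification of the certificate below. *)
Section InverseFactorial.
Variable R : numFieldType.

Definition ifact (z : int) : R := if z is Posz n then n`!%:R^-1 else 0.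

Lemma ifact_neg z : z < 0 -> ifact z = 0.
Proof. by case: z. Qed.

Lemma ifact_pred z : ifact (z - 1) = z%:~R * ifact z.
Proof.
case: z => [[|n]|n] /=; first by rewrite mul0r.
  by rewrite subSS subn0 factS natrM invfM mulrA pmulrn mulfV ?mul1r // pnatr_eq0.
by rewrite mulr0.
Qed.

Lemma bin_mul_bin_ifact n i k :
  ('C(n, i) * 'C(n - i, k))%:R = n`!%:R * ifact i * ifact k * ifact (n%:Z - i%:Z - k%:Z).
Proof.
have [i_le_n|n_lt_i] := leqP i n; last first.
  by rewrite bin_small // mul0n [ifact (_ - k%:Z)]ifact_neg ?mulr0 //; lia.
have [k_le|lt_k] := leqP k (n - i); last first.
  by rewrite (@bin_small (n - i)) // muln0 [ifact (_ - k%:Z)]ifact_neg ?mulr0 //; lia.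
have -> : n%:Z - i%:Z - k%:Z = (n - i - k)%N by lia.
rewrite /= -[n`!](bin_fact i_le_n) -[(n - i)`!](bin_fact k_le) !natrM.
by field; rewrite !pnatr_eq0 -!lt0n !fact_gt0.
Qed.

Lemma ifact_nat (n : nat) : ifact n = n.+1%:R * ifact n.+1.
Proof. by rewrite -[in LHS](addrK 1 n%:Z) -PoszD addn1 ifact_pred pmulrn. Qed.

Lemma binom_term_ifact n j :
  ('C(n, j) * 'C(n.+1 - j, j + 1))%:R =
  n`!%:R * (n%:R + 1 - j%:R) * ifact j * ifact j.+1 * ifact (n%:Z - j%:Z - j%:Z).
Proof.
rewrite addn1 bin_subS // mulnDr natrD !bin_mul_bin_ifact.
have -> : n%:Z - j%:Z - j.+1%:Z = n%:Z - j%:Z - j%:Z - 1 by lia.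
rewrite ifact_pred [ifact j]ifact_nat !rmorphB /= -!pmulrn.
ring.
Qed.

(* Zeilberger's certificate for the summand C(m,j) C(m+1-j,j+1) of [binom_sum 1 m.+1 m]. *)
Definition binom_cert (m j : nat) : R :=
  - 2%:R * (m%:R *+ 2 + 5%:R - j%:R *+ 2) * (m.+1)`!%:R
  * ifact (j%:Z - 1) * ifact j * ifact (m%:Z + 2 - j%:Z - j%:Z).

Lemma binom_term_rec m j :
  (m + 3)%:R * ('C(m.+2, j) * 'C(m.+3 - j, j + 1))%:R
  - 2%:R * (m + 3)%:R * ('C(m.+1, j) * 'C(m.+2 - j, j + 1))%:R
  - 3%:R * (m + 1)%:R * ('C(m, j) * 'C(m.+1 - j, j + 1))%:R
  = binom_cert m j.+1 - binom_cert m j.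
Proof.
rewrite !binom_term_ifact /binom_cert.
have -> : j.+1%:Z - 1 = j by lia.
rewrite ifact_pred [ifact j]ifact_nat.
set z := m%:Z + 2 - j%:Z - j%:Z.
have -> : m.+2%:Z - j%:Z - j%:Z = z by rewrite /z; lia.
have -> : m.+1%:Z - j%:Z - j%:Z = z - 1 by rewrite /z; lia.
have -> : m%:Z - j%:Z - j%:Z = z - 1 - 1 by rewrite /z; lia.
have -> : m%:Z + 2 - j.+1%:Z - j.+1%:Z = z - 1 - 1 by rewrite /z; lia.
have zE : z%:~R = m%:R + 2 - j%:R *+ 2 :> R by rewrite /z !intrB intrD -!pmulrn; ring.
rewrite !ifact_pred !factS !natrM [(z - 1)%:~R]intrB zE -!pmulrn; clearbody z.
ring.
Qed.

End InverseFactorial.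

Lemma binom_sum_diag_widen n K : (n < K)%N ->
  binom_sum 1 n.+1 n = (\sum_(k < K) 'C(n, k) * 'C(n.+1 - k, k + 1))%N.
Proof.
move=> n_lt_K; rewrite /binom_sum.
rewrite (big_ord_widen K (fun k => 'C(n, k) * 'C(n.+1 - k, k + 1))%N) //.
by rewrite big_mkcond; apply: eq_bigr => k _; case: ltnP => // n_lt_k; rewrite bin_small.
Qed.

Lemma binom_sum_diag_rec m :
  ((m + 3) * binom_sum 1 m.+3 m.+2
   = 2 * (m + 3) * binom_sum 1 m.+2 m.+1 + 3 * (m + 1) * binom_sum 1 m.+1 m)%N.
Proof.
have telescoped : \sum_(j < m.+3) (binom_cert rat m j.+1 - binom_cert rat m j) = 0.
  rewrite -(big_mkord xpredT (fun j => binom_cert rat m j.+1 - binom_cert rat m j)).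
  rewrite telescope_sumr // /binom_cert [ifact _ (m%:Z + 2 - _ - _)]ifact_neg; last by lia.
  by rewrite [ifact _ (0%:Z - 1)]ifact_neg ?mulr0 ?mul0r ?subrr.
rewrite -(eq_bigr _ (fun (j : 'I_m.+3) _ => binom_term_rec rat m j)) in telescoped.
rewrite !sumrB -!mulr_sumr in telescoped.
rewrite -!natr_sum -!binom_sum_diag_widen in telescoped; [|lia..].
apply/eqP; rewrite -(eqr_nat rat) natrD !natrM; apply/eqP.
by apply: subr0_eq; rewrite -{}telescoped; ring.
Qed.

(** * The generating function *)

Section DivisibilityByXn.
Variable R : fieldType.
Implicit Types p q : {poly R}.

Lemma dvdp_XnP N p : reflect (forall k, (k < N)%N -> p`_k = 0) ('X^N %| p).
Proof.
apply: (iffP (dvdpP _ _)) => [[q ->] k k_lt_N|low0]; first by rewrite coefMXn k_lt_N.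
exists (drop_poly N p); rewrite -[LHS](poly_take_drop N) -[RHS]add0r; congr (_ + _).
by apply/polyP => k; rewrite coef_take_poly coef0; case: ifP => // /low0.
Qed.

Lemma dvdp_Xn_deriv N p : 'X^(N.+1) %| p -> 'X^N %| p^`().
Proof.
case/(dvdpP _ _) => q ->; rewrite derivM derivXn mulrnAr -mulrnAl.
by rewrite dvdp_add ?dvdp_mulIr // dvdp_mull // dvdp_exp2l.
Qed.

Lemma dvdp_Xn_cancel N p q : q`_0 != 0 -> 'X^N %| q * p -> 'X^N %| p.
Proof.
move=> q0_neq0; rewrite Gauss_dvdpr // coprimep_expl // coprimep_sym coprimepX.
by rewrite rootE horner_coef0.
Qed.

End DivisibilityByXn.

Definition trunc (N : nat) (f : fps) : {poly rat} := \poly_(i < N) f i.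

Lemma coef_trunc N f k : (k < N)%N -> (trunc N f)`_k = f k.
Proof. by rewrite coef_poly => ->. Qed.

Lemma coef_trunc_mul N f g k : (k < N)%N -> (trunc N f * trunc N g)`_k = fps_mul f g k.
Proof.
move=> k_lt_N; rewrite coefM; apply: eq_bigr => i _.
by rewrite !coef_trunc //; have := ltn_ord i; lia.
Qed.

Definition poly_disc : {poly rat} := 1 - 'X *+ 2 - 'X^2 *+ 3.
Definition poly_num : {poly rat} := 1 - 'X *+ 3.
Definition poly_den : {poly rat} := 'X *+ 6 - 2.

Lemma coef_poly_disc k : poly_disc`_k = fps_disc k.
Proof.
rewrite /poly_disc !coefB !coefMn coef1 coefX coefXn /fps_disc.
by case: k => [|[|[|k]]]; rewrite /= ?mul0rn ?subr0 ?sub0r.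
Qed.

Lemma coef_poly_num k : poly_num`_k = fps_num_poly k.
Proof.
rewrite /poly_num coefB coefMn coef1 coefX /fps_num_poly.
by case: k => [|[|k]]; rewrite /= ?mul0rn ?subr0 ?sub0r.
Qed.

Lemma trunc_den N : trunc N.+2 fps_den = poly_den.
Proof.
apply/polyP => k; rewrite coef_poly /poly_den coefB coefMn coefX coefMn coef1 /fps_den.
by case: k => [|[|k]] //=; rewrite ?mul0rn ?subr0 ?sub0r //; case: ifP.
Qed.

Lemma poly_disc_factor : poly_disc = poly_num * (1 + 'X).
Proof. by rewrite /poly_disc /poly_num expr2; ring. Qed.

Lemma gf_quadratic s a N : is_sqrt_disc s -> is_gf s a ->
  'X^(N.+2) %| poly_num * (1 + trunc N.+2 a *+ 2) ^+ 2 - (1 + 'X).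
Proof.
move=> [_ s_sq] a_gf; set S := trunc N.+2 s; set C := 1 + trunc N.+2 a *+ 2.
have sq : 'X^(N.+2) %| S * S - poly_disc.
  by apply/dvdp_XnP => k k_lt; rewrite coefB coef_trunc_mul // s_sq coef_poly_disc subrr.
have lin : 'X^(N.+2) %| S - poly_num * C.
  have -> : S - poly_num * C = poly_den * trunc N.+2 a - (poly_num - S).
    by rewrite /C /poly_den /poly_num; ring.
  apply/dvdp_XnP => k k_lt; rewrite coefB -(trunc_den N) coef_trunc_mul // a_gf.
  by rewrite coefB coef_poly_num coef_trunc // subrr.
apply: (@dvdp_Xn_cancel _ _ _ poly_num); first by rewrite coef_poly_num.
have -> : poly_num * (poly_num * C ^+ 2 - (1 + 'X))
          = (S * S - poly_disc) - (S - poly_num * C) * (S + poly_num * C).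
  by rewrite poly_disc_factor; ring.
by rewrite dvdp_sub ?dvdp_mulr.
Qed.

Lemma gf_ode s a N : is_sqrt_disc s -> is_gf s a ->
  'X^(N.+1) %| poly_disc * (trunc N.+2 a)^`() - (1 + trunc N.+2 a *+ 2).
Proof.
move=> s_sqrt a_gf; set A := trunc N.+2 a; set C := 1 + A *+ 2.
set Z := poly_num * C ^+ 2 - (1 + 'X).
have Z0 : 'X^(N.+2) %| Z := gf_quadratic N s_sqrt a_gf.
have dC : C^`() = A^`() *+ 2 by rewrite /C derivD derivMn -polyC1 derivC add0r.
have dZ : Z^`() = - C ^+ 2 *+ 3 + poly_num * (C * C^`() *+ 2) - 1.
  by rewrite /Z /poly_num expr2 !derivE; ring.
apply: (@dvdp_Xn_cancel _ _ _ 4%:R); first by rewrite coefMn coef1.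
(* A combination of [Z] and [Z^`()] in which the terms in [C ^+ 3] cancel. *)
have -> : 4%:R * (poly_disc * A^`() - C)
          = poly_num * C * Z^`() + (C *+ 3 - poly_num * C^`() *+ 2) * Z.
  by rewrite dZ dC /Z poly_disc_factor /poly_num; ring.
by rewrite dvdp_add ?dvdp_mull ?dvdp_Xn_deriv // (dvdp_trans _ Z0) // dvdp_exp2l.
Qed.

Lemma coef_poly_disc_mul p k : (poly_disc * p)`_k =
  p`_k - (if k is j.+1 then p`_j else 0) *+ 2 - (if k is j.+2 then p`_j else 0) *+ 3.
Proof.
rewrite /poly_disc !mulrBl mul1r !mulrnAl !coefB !coefMn coefXM coefXnM.
by case: k => [|[|k]] //=; rewrite !subSS subn0.
Qed.

Lemma coef_ode_trunc (a : fps) k :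
  (poly_disc * (trunc k.+2 a)^`() - (1 + trunc k.+2 a *+ 2))`_k =
  a k.+1 *+ k.+1 - a k *+ k *+ 2 - a k.-1 *+ k.-1 *+ 3 - ((k == 0)%N%:R + a k *+ 2).
Proof.
rewrite coefB coef_poly_disc_mul coefD coef1 coefMn.
by case: k => [|[|k]]; rewrite /= !coef_deriv !coef_trunc; try lia; rewrite ?mulr0n.
Qed.

Lemma gf_rec s a : is_sqrt_disc s -> is_gf s a ->
  [/\ a 1%N = 1, a 2%N = 2 &
      forall k, (k + 3)%:R * a k.+3 = 2 * (k + 3)%:R * a k.+2 + 3 * (k + 1)%:R * a k.+1].
Proof.
move=> s_sqrt a_gf.
have a0 : a 0%N = 0.
  have := a_gf 0%N; rewrite /fps_mul big_ord1 /fps_den /fps_num_poly /= (proj1 s_sqrt) subrr.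
  by move/eqP; rewrite mulf_eq0 /= => /eqP.
have ode k :
    a k.+1 *+ k.+1 - a k *+ k *+ 2 - a k.-1 *+ k.-1 *+ 3 - ((k == 0)%N%:R + a k *+ 2) = 0.
  by rewrite -coef_ode_trunc; apply: (dvdp_XnP _ _ (gf_ode k s_sqrt a_gf)).
have a1 : a 1%N = 1 by move: (ode 0%N); rewrite a0 /=; lra.
have a2 : a 2%N = 2 by move: (ode 1%N); rewrite a1 /=; lra.
split=> // k; apply: subr0_eq; rewrite -(ode k.+2) /=; ring.
Qed.

Lemma linear_rec2_eq (R : idomainType) (c0 c1 c2 f g : nat -> R) :
  (forall k, c2 k != 0) ->
  (forall k, c2 k * f k.+2 = c1 k * f k.+1 + c0 k * f k) ->
  (forall k, c2 k * g k.+2 = c1 k * g k.+1 + c0 k * g k) ->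
  f 0%N = g 0%N -> f 1%N = g 1%N -> f =1 g.
Proof.
move=> c2_neq0 rec_f rec_g fg0 fg1.
suff fg k : f k = g k /\ f k.+1 = g k.+1 by move=> k; case: (fg k).
elim: k => [|k [fgk fgk1]] //; split=> //.
by apply: (mulfI (c2_neq0 k)); rewrite rec_f rec_g fgk fgk1.
Qed.

Unset Implicit Arguments.

Theorem corollary1 (s a : fps) :
  is_sqrt_disc s -> is_gf s a ->
  forall n : nat, (1 <= n)%N -> (num_paths n)%:R = a n.
Proof.
move=> s_sqrt a_gf [|n] // _; rewrite num_paths_binom_sum.
have [a1 a2 a_rec] := gf_rec s_sqrt a_gf.
pose q k : rat := (binom_sum 1 k.+1 k)%:R.
apply: (@linear_rec2_eq _ (fun k => 3 * (k + 1)%:R) (fun k => 2 * (k + 3)%:R)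
                          (fun k => (k + 3)%:R) q (fun k => a k.+1)) => [k|k|k||].
- by rewrite pnatr_eq0 addn3.
- by rewrite /q -!natrM -natrD binom_sum_diag_rec.
- exact: a_rec.
- by rewrite /q binom_sum_d0 a1.
- by rewrite /q binom_sum_dS !binom_sum_d0 a2.
Qed.
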